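(* Let $\mathcal{F}$ be an argumentation framework and $S\subseteq A_{\mathcal{F}}$. Then $S\in\mathit{tfcf2}(\mathcal{F})$ if and only if $S$ is conflict-free and $S$ is a naive extension of $[[\mathcal{F}\setminus\Delta_{\mathcal{F},S}]]$.
   Context: An argumentation framework (AF) is $\mathcal{F}=(A_{\mathcal{F}},R_{\mathcal{F}})$ with $R_{\mathcal{F}}\subseteq A_{\mathcal{F}}\times A_{\mathcal{F}}$; $a\rightarrow b$ means $(a,b)\in R_{\mathcal{F}}$. $\mathcal{F}|_B=(A_{\mathcal{F}}\cap B,R_{\mathcal{F}}\cap(B\times B))$. Conflict-free: no $a,b\in S$ with $a\rightarrow b$; naive extension: $\subseteq$-maximal conflict-free set. $\mathrm{SCC}(a)$: set of $b$ with directed attack paths (possibly length 0) from $a$ to $b$ and back. $D_S(X)=\{b\in X:\exists a\in S\setminus X,\ a\rightarrow b\}$. $\mathit{tfcf2}$: $C^0_S(a)=\mathrm{SCC}(a)$; $C^{\alpha+1}_S(a)$ = the strongly connected component of $a$ in $\mathcal{F}|_{C^\alpha_S(a)\setminus D_S(C^\alpha_S(a))}$ (empty if $a$ is not in that set); for limit $\lambda$, $C^\lambda_S(a)$ = the component of $a$ in $\mathcal{F}|_{\bigcap_{\alpha<\lambda}C^\alpha_S(a)}$; $\alpha_S(a)$ = least $\alpha$ with $a\notin C^\alpha_S(a)$ or $C^{\alpha+1}_S(a)=C^\alpha_S(a)$. $S\in\mathit{tfcf2}(\mathcal{F})$ iff $S$ is conflict-free and for each $a\in A_{\mathcal{F}}$,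 either $a\notin C^{\alpha_S(a)}_S(a)$ or $S\cap C^{\alpha_S(a)}_S(a)$ is a naive extension of $\mathcal{F}|_{C^{\alpha_S(a)}_S(a)}$. $b$ is reachable from $a$ modulo $B$, written $a\Rightarrow^B_{\mathcal{F}}b$, if there is a directed attack path from $a$ to $b$ in $\mathcal{F}|_B$. For $D\subseteq A_{\mathcal{F}}$, $\Delta_{\mathcal{F},S}(D)=\{a\in A_{\mathcal{F}}:\exists b\in S\,(b\rightarrow a\text{ and not }a\Rightarrow^{A_{\mathcal{F}}\setminus D}_{\mathcal{F}}b)\}$. This operator on subsets of $A_{\mathcal{F}}$ is monotone; $\Delta_{\mathcal{F},S}$ (as a set) denotes its least fixed point. $\mathcal{F}\setminus\Delta$ denotes $\mathcal{F}|_{A_{\mathcal{F}}\setminus\Delta}$. For an AF $\mathcal{G}$, the separation $[[\mathcal{G}]]$ is obtained from $\mathcal{G}$ by deleting all attacks between arguments lying in different strongly connected components of $\mathcal{G}$. *)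

(* sets are predicates T -> Prop; argumentation frameworks may be infinite. *)

Record AF (T : Type) : Type := mkAF {
  args : T -> Prop;
  att  : T -> T -> Prop        (* R_F : att a b  means  a -> b *)
}.
Arguments mkAF {T}.
Arguments args {T}.
Arguments att {T}.

Definition wf_AF {T} (F : AF T) : Prop :=
  forall a b, att F a b -> args F a /\ args F b.

Definition subset {T} (X Y : T -> Prop) : Prop := forall x, X x -> Y x.

Definition restrict {T} (F : AF T) (B : T -> Prop) : AF T :=
  mkAF (fun x => args F x /\ B x) (fun x y => att F x y /\ B x /\ B y).

Definition conflict_free {T} (F : AF T) (S : T -> Prop) : Prop :=
  subset S (args F) /\ (forall a b, S a -> S b -> att F a b -> False).

Definition naive {T} (F : AF T) (S : T -> Prop) : Prop :=
  conflict_free F S /\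
  (forall S', conflict_free F S' -> subset S S' -> subset S' S).

Inductive path {T} (F : AF T) : T -> T -> Prop :=
| path_refl a : args F a -> path F a a
| path_step a c b : att F a c -> path F c b -> path F a b.

(* SCC(a) in F; empty if a is not an argument of F *)
Definition SCC {T} (F : AF T) (a : T) : T -> Prop :=
  fun b => path F a b /\ path F b a.

Definition DS {T} (F : AF T) (S X : T -> Prop) : T -> Prop :=
  fun b => X b /\ exists a, S a /\ ~ X a /\ att F a b.

(* successor step: C^{alpha+1} from C^alpha *)
Definition next_comp {T} (F : AF T) (S : T -> Prop) (a : T) (X : T -> Prop)
  : T -> Prop :=
  SCC (restrict F (fun x => X x /\ ~ DS F S X x)) a.

(* The transfinite sequence (C^alpha_S(a))_alpha, encoded ordinal-free as the
   least family of sets containing C^0 = SCC(a), closed under the successor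
   step, and closed under the limit step (component of a in the intersection
   of a family of earlier stages). *)
Inductive stage {T} (F : AF T) (S : T -> Prop) (a : T) : (T -> Prop) -> Prop :=
| stage0 : stage F S a (SCC F a)
| stageS X : stage F S a X -> stage F S a (next_comp F S a X)
| stageL (Fam : (T -> Prop) -> Prop) :
    (forall X, Fam X -> stage F S a X) ->
    stage F S a (SCC (restrict F (fun x => forall X, Fam X -> X x)) a).

(* tfcf2 semantics: the stage C^{alpha_S(a)} is the (unique) stage X with
   a \notin X or C^{alpha+1} = C^alpha, i.e. next_comp X = X. *)
Definition tfcf2 {T} (F : AF T) (S : T -> Prop) : Prop :=
  conflict_free F S /\
  forall a, args F a ->
    forall X, stage F S a X ->
      (~ X a \/ (forall x, next_comp F S a X x <-> X x)) ->
      (~ X a \/ naive (restrict F X) (fun x => S x /\ X x)).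

Definition reach_mod {T} (F : AF T) (B : T -> Prop) (a b : T) : Prop :=
  path (restrict F B) a b.

Definition Delta_op {T} (F : AF T) (S D : T -> Prop) : T -> Prop :=
  fun a => args F a /\
    exists b, S b /\ att F b a /\
      ~ reach_mod F (fun x => args F x /\ ~ D x) a b.

(* its least fixed point (Knaster--Tarski: intersection of all pre-fixed points) *)
Definition Delta {T} (F : AF T) (S : T -> Prop) : T -> Prop :=
  fun x => forall D, subset D (args F) -> subset (Delta_op F S D) D -> D x.

Definition remove {T} (F : AF T) (Dl : T -> Prop) : AF T :=
  restrict F (fun x => args F x /\ ~ Dl x).

Definition separation {T} (G : AF T) : AF T :=
  mkAF (args G) (fun x y => att G x y /\ SCC G x y).

(* Let G be F with Delta_{F,S} removed and K(a) the strongly connected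
   component of a in G.  Every stage C^alpha_S(a) contains K(a): an argument
   of K(a) cut off by D_S would be attacked from S by an argument it cannot
   reach back in G, which puts it into Delta_{F,S}.  Conversely a stage X that
   is a fixed point of the successor step avoids Delta_{F,S}, because the
   arguments outside X form a pre-fixed point of the Delta-operator; hence X
   lies inside K(a).  So the final stage of a is exactly K(a), and tfcf2 asks
   S to be naive on every strongly connected component of G, which is
   naivety in the separation [[G]]. *)


Section Frameworks.

Context {T : Type}.
Implicit Types (F G : AF T) (B C S X Y : T -> Prop).

Definition subAF G F : Prop :=
  subset (args G) (args F) /\ (forall x y, att G x y -> att F x y).

Definition af_equiv F G : Prop := subAF F G /\ subAF G F.

Lemma subAF_refl F : subAF F F.
Proof. split; [intros x Hx | intros x y Hxy]; assumption. Qed.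

Lemma subAF_restrict F B : subAF (restrict F B) F.
Proof. split; simpl; [intros x [Hx _] | intros x y [Hxy _]]; assumption. Qed.

Lemma restrict_subAF G F B C :
  subAF G F -> subset B C -> subAF (restrict G B) (restrict F C).
Proof.
  intros [Ha Hr] HBC; split; simpl.
  - intros x [Hx HBx]; auto.
  - intros x y [Hxy [HBx HBy]]; auto.
Qed.

Lemma wf_restrict F B : wf_AF F -> wf_AF (restrict F B).
Proof. intros HF x y [Hxy [HBx HBy]]; simpl; destruct (HF x y Hxy); tauto. Qed.

Lemma path_trans F x y z : path F x y -> path F y z -> path F x z.
Proof. induction 1; intros; [assumption | eapply path_step; eauto]. Qed.

Lemma path_subAF G F x y : subAF G F -> path G x y -> path F x y.
Proof.
  intros [Ha Hr]; induction 1; [apply path_refl | eapply path_step]; eauto.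
Qed.

Lemma path_args F x y : wf_AF F -> path F x y -> args F x /\ args F y.
Proof. intros HF; induction 1; [| destruct (HF _ _ H)]; tauto. Qed.

Lemma path_restrict F B x y : path (restrict F B) x y -> B x /\ B y.
Proof. induction 1; simpl in *; tauto. Qed.

Lemma SCC_refl F a : args F a -> SCC F a a.
Proof. split; apply path_refl; assumption. Qed.

Lemma SCC_sym F a b : SCC F a b -> SCC F b a.
Proof. intros [Hab Hba]; split; assumption. Qed.

Lemma SCC_trans F a b c : SCC F a b -> SCC F b c -> SCC F a c.
Proof. intros [Hab Hba] [Hbc Hcb]; split; eapply path_trans; eauto. Qed.

Lemma SCC_subAF G F a : subAF G F -> subset (SCC G a) (SCC F a).
Proof. intros HGF x [Hax Hxa]; split; eapply path_subAF; eauto. Qed.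

Lemma SCC_restrict_sub F B a : subset (SCC (restrict F B) a) B.
Proof. intros x [_ Hxa]; exact (proj1 (path_restrict _ _ _ _ Hxa)). Qed.

Lemma path_restrict_SCC F a x y :
  wf_AF F -> SCC F a x -> SCC F a y -> path F x y ->
  path (restrict F (SCC F a)) x y.
Proof.
  intros HF Hx Hy Hxy; induction Hxy as [x Hx' | x c y Hxc Hcy IH].
  - apply path_refl; split; assumption.
  - assert (Hc : SCC F x c).
    { split.
      - exact (path_step F x c c Hxc (path_refl F c (proj2 (HF x c Hxc)))).
      - eapply path_trans; [exact Hcy|].
        exact (proj1 (SCC_trans _ _ _ _ (SCC_sym _ _ _ Hy) Hx)). }
    assert (Hac : SCC F a c) by exact (SCC_trans _ _ _ _ Hx Hc).
    exact (path_step (restrict F (SCC F a)) x c y (conj Hxc (conj Hx Hac)) (IH Hac Hy)).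
Qed.

Lemma SCC_sub_SCC_restrict G F B a :
  wf_AF G -> subAF G F -> subset (SCC G a) B ->
  subset (SCC G a) (SCC (restrict F B) a).
Proof.
  intros HG HGF HB x Hx.
  assert (Ha : SCC G a a) by exact (SCC_trans _ _ _ _ Hx (SCC_sym _ _ _ Hx)).
  assert (Hsub : subAF (restrict G (SCC G a)) (restrict F B))
    by exact (restrict_subAF _ _ _ _ HGF HB).
  split; eapply path_subAF; try exact Hsub; apply path_restrict_SCC;
    try assumption; apply Hx.
Qed.

Lemma naive_equiv F G S S' :
  af_equiv F G -> (forall x, S x <-> S' x) -> naive F S -> naive G S'.
Proof.
  intros [[HaFG HrFG] [HaGF HrGF]] HSS' [[HSF HcfS] Hmax]; split; [split|].
  - intros x Hx; apply HaFG, HSF, HSS', Hx.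
  - intros u v Hu Hv Huv; apply (HcfS u v); try apply HSS'; auto.
  - intros S'' [HS''G HcfS''] Hsub x Hx.
    apply HSS', (Hmax S''); [split | intros y Hy; apply Hsub, HSS', Hy | exact Hx].
    + intros y Hy; apply HaGF, HS''G, Hy.
    + intros u v Hu Hv Huv; exact (HcfS'' u v Hu Hv (HrFG u v Huv)).
Qed.

Lemma naive_restrict_iff F B X Y S :
  subset Y B -> (forall x, X x <-> Y x) ->
  naive (restrict F X) (fun x => S x /\ X x) <->
  naive (restrict (restrict F B) Y) (fun x => S x /\ Y x).
Proof.
  intros HYB HXY.
  assert (Heq : af_equiv (restrict F X) (restrict (restrict F B) Y)).
  { unfold af_equiv, subAF, subset in *; simpl; firstorder. }
  assert (HSXY : forall x, S x /\ X x <-> S x /\ Y x) by (intro x; specialize (HXY x); tauto).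
  split; apply naive_equiv.
  - exact Heq.
  - exact HSXY.
  - exact (conj (proj2 Heq) (proj1 Heq)).
  - intro x; specialize (HSXY x); tauto.
Qed.

Lemma separation_att G a u v :
  SCC G a u -> SCC G a v -> att G u v -> att (separation G) u v.
Proof.
  intros Hu Hv Huv; split; [exact Huv|].
  exact (SCC_trans _ _ _ _ (SCC_sym _ _ _ Hu) Hv).
Qed.

Lemma naive_separation_SCC G S a :
  naive (separation G) S ->
  naive (restrict G (SCC G a)) (fun x => S x /\ SCC G a x).
Proof.
  intros [[HSG HcfS] Hmax]; split; [split|].
  - intros x [Hx Hax]; split; [apply HSG|]; assumption.
  - intros u v [Hu Hau] [Hv Hav] [Huv _].
    exact (HcfS u v Hu Hv (separation_att _ _ _ _ Hau Hav Huv)).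
  - intros S' [HS'G HcfS'] Hsub x Hx.
    assert (HS'SCC : forall y, S' y -> SCC G a y) by (intros y Hy; apply HS'G, Hy).
    assert (Hcf : conflict_free (separation G) (fun y => S y \/ S' y)).
    { split.
      - intros y [Hy | Hy]; [apply HSG | apply HS'G]; assumption.
      - intros u v Hu Hv [Huv Huvc].
        destruct Hu as [Hu | Hu], Hv as [Hv | Hv].
        + exact (HcfS u v Hu Hv (conj Huv Huvc)).
        + assert (Hau : SCC G a u)
            by exact (SCC_trans _ _ _ _ (HS'SCC v Hv) (SCC_sym _ _ _ Huvc)).
          apply (HcfS' u v); [apply Hsub; split | | split; [|split]]; auto.
        + assert (Hav : SCC G a v) by exact (SCC_trans _ _ _ _ (HS'SCC u Hu) Huvc).
          apply (HcfS' u v); [| apply Hsub; split | split; [|split]]; auto.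
        + apply (HcfS' u v); [| | split; [|split]]; auto. }
    split; [apply (Hmax _ Hcf); [intros y Hy; left |]; auto | apply HS'SCC, Hx].
Qed.

Lemma naive_separation_of_SCC G S :
  subset S (args G) ->
  (forall a, args G a -> naive (restrict G (SCC G a)) (fun x => S x /\ SCC G a x)) ->
  naive (separation G) S.
Proof.
  intros HSG Hnaive; split; [split|].
  - exact HSG.
  - intros u v Hu Hv [Huv Huvc].
    destruct (Hnaive u (HSG u Hu)) as [[_ Hcf] _].
    apply (Hcf u v); [split; [|apply SCC_refl, HSG] | split | split; [|split]];
      auto using SCC_refl.
  - intros S' [HS'G HcfS'] Hsub x Hx.
    assert (Hxx : SCC G x x) by exact (SCC_refl G x (HS'G x Hx)).
    destruct (Hnaive x (HS'G x Hx)) as [_ Hmax].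
    apply (Hmax (fun y => S' y /\ SCC G x y)); [split | intros y [Hy Hxy] |];
      auto.
    + intros y [Hy Hxy]; split; [apply HS'G|]; assumption.
    + intros u v [Hu Hxu] [Hv Hxv] [Huv _].
      exact (HcfS' u v Hu Hv (separation_att _ _ _ _ Hxu Hxv Huv)).
Qed.

Lemma Delta_op_mono F S D D' :
  subset D D' -> subset (Delta_op F S D) (Delta_op F S D').
Proof.
  intros HDD' x [Hx [b [Hb [Hbx Hnreach]]]].
  split; [exact Hx|]; exists b; split; [exact Hb|]; split; [exact Hbx|].
  intro Hreach; apply Hnreach; eapply path_subAF; [| exact Hreach].
  apply restrict_subAF; [apply subAF_refl | intros y [Hy HnD']; split; auto].
Qed.

Lemma Delta_least F S D :
  subset D (args F) -> subset (Delta_op F S D) D -> subset (Delta F S) D.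
Proof. intros HD Hpre x Hx; exact (Hx D HD Hpre). Qed.

Lemma Delta_op_Delta F S : subset (Delta_op F S (Delta F S)) (Delta F S).
Proof.
  intros x Hx D HD Hpre; apply Hpre; revert x Hx.
  apply Delta_op_mono, Delta_least; assumption.
Qed.

Lemma Delta_sub_Delta_op F S : subset (Delta F S) (Delta_op F S (Delta F S)).
Proof.
  apply Delta_least; [intros x [Hx _]; exact Hx |].
  apply Delta_op_mono, Delta_op_Delta.
Qed.

Lemma conflict_free_Delta F S x : conflict_free F S -> S x -> ~ Delta F S x.
Proof.
  intros [_ Hcf] Hx HDx.
  destruct (Delta_sub_Delta_op F S x HDx) as [_ [b [Hb [Hbx _]]]].
  exact (Hcf b x Hb Hx Hbx).
Qed.

End Frameworks.

Section Stages.

Context {T : Type} (F : AF T) (S : T -> Prop) (a : T).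
Implicit Types X : T -> Prop.

Definition stable X : Prop := forall x, next_comp F S a X x <-> X x.

Lemma exists_stable_stage : exists X, stage F S a X /\ stable X.
Proof.
  exists (SCC (restrict F (fun x => forall X, stage F S a X -> X x)) a).
  assert (Hstage : stage F S a (SCC (restrict F (fun x => forall X, stage F S a X -> X x)) a))
    by (apply stageL; trivial).
  split; [exact Hstage|]; intro x; split.
  - intro Hx; apply SCC_restrict_sub in Hx; exact (proj1 Hx).
  - intro Hx; apply SCC_restrict_sub in Hx; apply Hx, stageS, Hstage.
Qed.

Hypothesis HF : wf_AF F.

Lemma SCC_remove_Delta_disjoint_DS X z :
  subset (SCC (remove F (Delta F S)) a) X ->
  SCC (remove F (Delta F S)) a z -> ~ DS F S X z.
Proof.
  intros HKX Hz [_ [b [Hb [HnXb Hbz]]]].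
  destruct (SCC_restrict_sub _ _ _ _ Hz) as [Hzarg HnDz].
  apply HnDz, Delta_op_Delta; split; [exact Hzarg|].
  exists b; split; [exact Hb|]; split; [exact Hbz|].
  intro Hzb; apply HnXb, HKX.
  destruct Hz as [Haz Hza].
  destruct (path_restrict _ _ _ _ Hzb) as [Hz' Hb'].
  split; [exact (path_trans _ a z b Haz Hzb) |].
  exact (path_step (remove F (Delta F S)) b z a (conj Hbz (conj Hb' Hz')) Hza).
Qed.

Lemma SCC_remove_Delta_sub_stage X :
  stage F S a X -> subset (SCC (remove F (Delta F S)) a) X.
Proof.
  assert (HG : wf_AF (remove F (Delta F S))) by exact (wf_restrict _ _ HF).
  induction 1 as [| X _ IH | Fam _ IH].
  - apply SCC_subAF, subAF_restrict.
  - apply SCC_sub_SCC_restrict; [exact HG | apply subAF_restrict |].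
    intros z Hz; split; [apply IH, Hz | exact (SCC_remove_Delta_disjoint_DS X z IH Hz)].
  - apply SCC_sub_SCC_restrict; [exact HG | apply subAF_restrict |].
    intros z Hz Y HY; exact (IH Y HY z Hz).
Qed.

Lemma stable_sub_args X : stable X -> subset X (args F).
Proof.
  intros Hst x Hx; apply Hst in Hx.
  exact (proj1 (proj2 (path_args _ _ _ (wf_restrict _ _ HF) (proj1 Hx)))).
Qed.

Lemma stable_disjoint_Delta X y : stable X -> X y -> ~ Delta F S y.
Proof.
  intros Hst Hy HDy.
  set (P := fun z => args F z /\ ~ X z).
  assert (Hpre : subset (Delta_op F S P) P).
  { intros z [Hz [b [Hb [Hbz Hnreach]]]]; split; [exact Hz|]; intro Hxz.
    destruct (proj2 (Hst z) Hxz) as [Haz Hza].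
    assert (HnXb : ~ X b).
    { intro Hxb; apply Hnreach.
      destruct (proj2 (Hst b) Hxb) as [Hab _].
      eapply path_subAF; [| eapply path_trans; [exact Hza | exact Hab]].
      apply restrict_subAF; [apply subAF_refl|].
      intros w [Hw _]; split; [exact (stable_sub_args X Hst w Hw) | intros [_ Hnw]; tauto]. }
    apply (proj2 (proj2 (path_restrict _ _ _ _ Haz))).
    split; [exact Hxz | exists b; auto]. }
  destruct (Delta_least F S P (fun z Hz => proj1 Hz) Hpre y HDy) as [_ HnXy].
  exact (HnXy Hy).
Qed.

Lemma stable_sub_SCC_remove_Delta X :
  stable X -> subset X (SCC (remove F (Delta F S)) a).
Proof.
  intros Hst x Hx.
  apply (SCC_subAF (restrict F (fun z => X z /\ ~ DS F S X z))); [| apply Hst, Hx].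
  apply restrict_subAF; [apply subAF_refl|].
  intros z [Hz _]; split; [exact (stable_sub_args X Hst z Hz) |].
  exact (stable_disjoint_Delta X z Hst Hz).
Qed.

Lemma stable_stage_SCC X :
  stage F S a X -> stable X -> forall x, X x <-> SCC (remove F (Delta F S)) a x.
Proof.
  intros HX Hst x; split.
  - apply stable_sub_SCC_remove_Delta, Hst.
  - apply SCC_remove_Delta_sub_stage, HX.
Qed.

End Stages.

Theorem theorem8 (T : Type) (F : AF T) (HF : wf_AF F)
  (S : T -> Prop) (HS : subset S (args F)) :
  tfcf2 F S <->
  (conflict_free F S /\ naive (separation (remove F (Delta F S))) S).
Proof.
  split.
  - intros [Hcf Htf]; split; [exact Hcf|].
    apply naive_separation_of_SCC.
    + intros x Hx; split; [apply HS, Hx | split; [apply HS, Hx |]].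
      exact (conflict_free_Delta F S x Hcf Hx).
    + intros a Ha.
      destruct (exists_stable_stage F S a) as [X [HX Hst]].
      pose proof (stable_stage_SCC F S a HF X HX Hst) as HXK.
      apply (naive_restrict_iff F _ X); [apply SCC_restrict_sub | exact HXK |].
      destruct (Htf a (proj1 Ha) X HX (or_intror Hst)) as [HnXa | Hnaive];
        [exfalso; apply HnXa, HXK, SCC_refl, Ha | exact Hnaive].
  - intros [Hcf Hnaive]; split; [exact Hcf|].
    intros a _ X HX [HnXa | Hst]; [left; exact HnXa | right].
    apply (naive_restrict_iff F _ X _ S
             (SCC_restrict_sub _ _ _) (stable_stage_SCC F S a HF X HX Hst)).
    apply naive_separation_SCC, Hnaive.
Qed.
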